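(* Consider the dynamic pricing data structure described in the context, and let $d_{\max}$ be the largest degree of any vertex of the current graph $W$. Then the running time of $\textsc{InsEdge}$ is in $\mathcal{O}(1)$, of $\textsc{DelEdge}$ is in $\mathcal{O}(d_{\max})$, of $\textsc{DecWeight}$ is in $\mathcal{O}(d_{\max}^2)$, and of $\textsc{IncWeight}$ is in $\mathcal{O}(d_{\max})$.
   Context: Let $W$ be a finite simple undirected graph with vertex weights $w:V(W)\to\mathbb{R}_{\ge0}$, stored with adjacency lists; each edge $e$ carries a price $p(e)$ and a set $C\subseteq V(W)$ is maintained. For a vertex $v$, $\delta(v)$ is the set of edges incident to $v$ and $s(v)=\sum_{e\in\delta(v)}p(e)$ (the value $s(v)$ is stored for each vertex). $v$ is tight if $s(v)=w(v)$. Procedures: $\textsc{Update}(F)$: for each $e=\{u,v\}\in F$ in turn, if $u$ or $v$ is tight skip $e$; otherwise increase $p(e)$ until $u$ or $v$ is tight and add the newly tight vertices to $C$. $\textsc{InsEdge}(e_n=\{u,v\})$: add $e_n$ to $E(W)$ with $p(e_n)=0$; call $\textsc{Update}(\{e_n\})$. $\textsc{DelEdge}(e_d=\{u,v\})$: remove $e_d$ from $E(W)$ and update $s(u),s(v)$; set $C\gets C\setminus\{u,v\}$; let $F=\{\{x,y\}\in E(W)\mid y\in\{u,v\},\ x\text{ not tight}\}$; call $\textsc{Update}(F)$. $\textsc{DecWeight}(v,w_n)$: set $w(v)\gets w_n$; $C\gets C\setminus\{v\}$; $F\gets\emptyset$; for each $e=\{v,x\}\in\delta(v)$: set $p(e)\gets0$,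 and if $x$ is not tight then $C\gets C\setminus\{x\}$ and $F\gets F\cup\{\{x,y\}\in E(W)\mid y\text{ not tight}\}\cup\{e\}$; finally call $\textsc{Update}(F)$. $\textsc{IncWeight}(v,w_n)$: set $w(v)\gets w_n$; if $v\in C$, set $C\gets C\setminus\{v\}$, let $F=\{\{x,v\}\in E(W)\mid x\text{ not tight}\}$ and call $\textsc{Update}(F)$. *)

(* An explicit, step-counting model of the dynamic pricing
   data structure: every operation returns the new state together with the
   number of elementary steps it performed (unit cost per constant-time block,
   per adjacency-list entry scanned, and per edge handled by Update). *)
From HB Require Import structures.
From mathcomp Require Import all_boot all_order all_algebra.
Set Implicit Arguments. Unset Strict Implicit. Unset Printing Implicit Defensive.
Import Order.TTheory GRing.Theory Num.Theory.
Local Open Scope ring_scope.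

Section Pricing.
Variables (R : realFieldType) (V : finType).

(* adjacency lists, edge prices (symmetric, p u v = p v u = p({u,v})),
   vertex weights, stored sums s(v), and the set C *)
Record state := State {
  adj : V -> seq V;
  price : V -> V -> R;
  wt : V -> R;
  sv : V -> R;
  cov : {set V} }.

Definition upd {X : Type} (f : V -> X) (v : V) (a : X) : V -> X :=
  fun x => if x == v then a else f x.

Definition set_adj st a := State a (price st) (wt st) (sv st) (cov st).
Definition set_price st p := State (adj st) p (wt st) (sv st) (cov st).
Definition set_wt st w := State (adj st) (price st) w (sv st) (cov st).
Definition set_sv st s := State (adj st) (price st) (wt st) s (cov st).
Definition set_cov st C := State (adj st) (price st) (wt st) (sv st) C.

Definition set_edge_price st u v (a : R) :=
  set_price st (fun x y => if ((x == u) && (y == v)) || ((x == v) && (y == u))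
                           then a else price st x y).

Definition tight st v : bool := sv st v == wt st v.

Definition deg st v : nat := size (adj st v).
Definition dmax st : nat := (\max_(v : V) deg st v)%N.

Definition update_edge (st : state) (e : V * V) : state * nat :=
  let: (u, v) := e in
  if tight st u || tight st v then (st, 1%N) else
  let d := Num.min (wt st u - sv st u) (wt st v - sv st v) in
  let st1 := set_edge_price st u v (price st u v + d) in
  let st2 := set_sv st1 (upd (upd (sv st1) u (sv st1 u + d)) v (sv st1 v + d)) in
  let st3 := set_cov st2 (cov st2 :|: [set x in [:: u; v] | tight st2 x]) in
  (st3, 1%N).

Fixpoint Update (st : state) (F : seq (V * V)) : state * nat :=
  match F with
  | [::] => (st, 1%N)
  | e :: F' => let: (st1, c1) := update_edge st e in
               let: (st2, c2) := Update st1 F' in (st2, (c1 + c2)%N)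
  end.

Definition InsEdge (st : state) (u v : V) : state * nat :=
  let st1 := set_adj st (upd (upd (adj st) u (v :: adj st u)) v (u :: adj st v)) in
  let st2 := set_edge_price st1 u v 0 in
  let: (st3, c) := Update st2 [:: (u, v)] in (st3, (1 + c)%N).

Definition DelEdge (st : state) (u v : V) : state * nat :=
  let pe := price st u v in
  (* removal from the two adjacency lists: scanning costs their lengths *)
  let c0 := (deg st u + deg st v)%N in
  let st1 := set_adj st (upd (upd (adj st) u (rem v (adj st u))) v (rem u (adj st v))) in
  let st2 := set_edge_price st1 u v 0 in
  let st3 := set_sv st2 (upd (upd (sv st2) u (sv st2 u - pe)) v (sv st2 v - pe)) in
  let st4 := set_cov st3 (cov st3 :\ u :\ v) in
  let F := [seq (x, y) | y <- [:: u; v], x <- [seq x <- adj st4 y | ~~ tight st4 x]] in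
  let c1 := (deg st4 u + deg st4 v)%N in
  let: (st5, c2) := Update st4 F in (st5, (1 + c0 + c1 + c2)%N).

Fixpoint decweight_loop (v : V) (st : state) (xs : seq V) (F : seq (V * V))
  : state * seq (V * V) * nat :=
  match xs with
  | [::] => (st, F, 1%N)
  | x :: xs' =>
    let pe := price st v x in
    let st1 := set_edge_price st v x 0 in
    let st2 := set_sv st1 (upd (upd (sv st1) v (sv st1 v - pe)) x (sv st1 x - pe)) in
    let: (st3, F1, c) :=
      if ~~ tight st2 x then
        (set_cov st2 (cov st2 :\ x),
         F ++ [seq (x, y) | y <- [seq y <- adj st2 x | ~~ tight st2 y]] ++ [:: (v, x)],
         (1 + deg st2 x)%N)
      else (st2, F, 1%N) in
    let: (st4, F2, c') := decweight_loop v st3 xs' F1 in (st4, F2, (c + c')%N)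
  end.

Definition DecWeight (st : state) (v : V) (wn : R) : state * nat :=
  let st1 := set_wt st (upd (wt st) v wn) in
  let st2 := set_cov st1 (cov st1 :\ v) in
  let: (st3, F, c1) := decweight_loop v st2 (adj st2 v) [::] in
  let: (st4, c2) := Update st3 F in (st4, (1 + c1 + c2)%N).

Definition IncWeight (st : state) (v : V) (wn : R) : state * nat :=
  let st1 := set_wt st (upd (wt st) v wn) in
  if v \in cov st1 then
    let st2 := set_cov st1 (cov st1 :\ v) in
    let F := [seq (x, v) | x <- [seq x <- adj st2 v | ~~ tight st2 x]] in
    let: (st3, c) := Update st2 F in (st3, (1 + deg st2 v + c)%N)
  else (st1, 1%N).

Definition wf_state (st : state) : Prop :=
  [/\ forall u v, (v \in adj st u) = (u \in adj st v),
      forall v, v \notin adj st v,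
      forall v, uniq (adj st v) &
      forall v, 0 <= wt st v].

End Pricing.

Definition cost {R : realFieldType} {V : finType} (r : state R V * nat) : nat := r.2.

From mathcomp Require Import all_boot all_order all_algebra.
From mathcomp Require Import zify.
Import Order.TTheory GRing.Theory Num.Theory.

(* Step counts never depend on prices or weights: [Update F] costs
   [size F + 1], and every list that is scanned or handed to [Update] is a
   filtered copy of at most two adjacency lists, except in DecWeight, which
   gathers one filtered adjacency list per neighbour of [v].  This gives the
   bounds O(1), O(dmax), O(dmax^2) and O(dmax). *)

Section PricingCost.
Context {R : realFieldType} {V : finType}.
Implicit Types (st : state R V) (F : seq (V * V)).

Lemma update_edge_cost st e : (update_edge st e).2 = 1.
Proof. by case: e => u v; rewrite /update_edge; case: ifP. Qed.

Lemma Update_cost st F : cost (Update st F) = (size F).+1.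
Proof.
elim: F st => [//|e F IH] st /=.
case: (update_edge st e) (update_edge_cost st e) => st1 _ /= ->.
by case: (Update st1 F) (IH st1) => st2 c2 /= ->.
Qed.

Lemma deg_le_dmax st v : deg st v <= dmax st.
Proof. exact: leq_bigmax. Qed.

Lemma size_filter_le {T : Type} (a : pred T) (s : seq T) :
  size (filter a s) <= size s.
Proof. by rewrite size_filter count_size. Qed.

Lemma InsEdge_cost st u v : cost (InsEdge st u v) = 3.
Proof.
rewrite /InsEdge; set st2 := set_edge_price _ _ _ _.
by case: (Update st2 _) (Update_cost st2 [:: (u, v)]) => st3 c /= ->.
Qed.

Lemma DelEdge_cost st u v :
  cost (DelEdge st u v) <= 2 + 6 * dmax st.
Proof.
rewrite /DelEdge; set st4 := set_cov _ _; set F := [seq _ | y <- _, x <- _].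
case: (Update st4 F) (Update_cost st4 F) => st5 c /= ->.
have deg_st4 y : deg st4 y <= dmax st.
  apply: leq_trans (deg_le_dmax st y); rewrite /deg /= /upd.
  by case: eqP => [->|_]; [|case: eqP => [->|_]]; rewrite ?(size_subseq (rem_subseq _ _)).
have size_F : size F <= deg st4 u + deg st4 v.
  rewrite /F /= size_cat cats0 !size_map.
  by apply: leq_add; apply: size_filter_le.
have := deg_le_dmax st u; have := deg_le_dmax st v.
have := deg_st4 u; have := deg_st4 v; lia.
Qed.

Lemma decweight_loop_size v F d st xs :
  (forall x, x \in xs -> deg st x <= d) ->
  size (decweight_loop v st xs F).1.2 <= size F + size xs * d.+1.
Proof.
elim: xs st F => [|x xs IH] st F deg_xs /=; first by rewrite addn0.
have [deg_x deg_xs'] : deg st x <= d /\ (forall y, y \in xs -> deg st y <= d).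
  by split=> [|y y_xs]; apply: deg_xs; rewrite inE ?eqxx ?y_xs ?orbT.
case: ifP => _ /=.
- set st3 := set_cov _ _; set F1 := F ++ _.
  case: (decweight_loop v st3 xs F1) (IH st3 F1 deg_xs') => [[st4 F2] c'] /=.
  move/leq_trans; apply.
  rewrite /F1 !size_cat size_map /= mulSn.
  set nbrs := [seq y <- adj st x | _].
  have : size nbrs <= deg st x := size_filter_le _ _.
  lia.
- set st2 := set_sv _ _.
  case: (decweight_loop v st2 xs F) (IH st2 F deg_xs') => [[st4 F2] c'] /=.
  by move/leq_trans; apply; rewrite mulSn; lia.
Qed.

Lemma decweight_loop_cost v F d st xs :
  (forall x, x \in xs -> deg st x <= d) ->
  (decweight_loop v st xs F).2 <= 1 + size xs * d.+1.
Proof.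
elim: xs st F => [|x xs IH] st F deg_xs //=.
have [deg_x deg_xs'] : deg st x <= d /\ (forall y, y \in xs -> deg st y <= d).
  by split=> [|y y_xs]; apply: deg_xs; rewrite inE ?eqxx ?y_xs ?orbT.
case: ifP => _ /=.
- set st3 := set_cov _ _; set F1 := F ++ _.
  case: (decweight_loop v st3 xs F1) (IH st3 F1 deg_xs') => [[st4 F2] c'] /=.
  by rewrite mulSn; move: deg_x; rewrite /deg /=; lia.
- set st2 := set_sv _ _.
  case: (decweight_loop v st2 xs F) (IH st2 F deg_xs') => [[st4 F2] c'] /=.
  by rewrite mulSn; lia.
Qed.

Lemma DecWeight_cost st v wn :
  cost (DecWeight st v wn) <= 3 + 2 * (dmax st).+1 * dmax st.
Proof.
rewrite /DecWeight; set st2 := set_cov _ _.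
have deg_adj x : x \in adj st2 v -> deg st2 x <= dmax st.
  by move=> _; apply: deg_le_dmax.
have size_F := decweight_loop_size v [::] _ _ _ deg_adj.
have cost_loop := decweight_loop_cost v [::] _ _ _ deg_adj.
case: (decweight_loop v st2 (adj st2 v) [::]) size_F cost_loop => [[st3 F] c1] /=.
case: (Update st3 F) (Update_cost st3 F) => st4 c2 /= ->.
have : size (adj st v) * (dmax st).+1 <= dmax st * (dmax st).+1.
  by rewrite leq_mul2r deg_le_dmax orbT.
lia.
Qed.

Lemma IncWeight_cost st v wn :
  cost (IncWeight st v wn) <= 2 + 2 * dmax st.
Proof.
rewrite /IncWeight; case: ifP => _ //.
set st2 := set_cov _ _; set F := [seq _ | x <- _].
case: (Update st2 F) (Update_cost st2 F) => st3 c /= ->.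
have : size F <= deg st v by rewrite size_map size_filter_le.
have := deg_le_dmax st v; rewrite /deg /=; lia.
Qed.

End PricingCost.

Local Open Scope ring_scope.

Theorem theorem2 :
  exists c : nat,
  forall (R : realFieldType) (V : finType) (st : state R V),
    wf_state st ->
    [/\ (forall u v : V, u != v -> v \notin adj st u ->
           (cost (InsEdge st u v) <= c)%N),
        (forall u v : V, v \in adj st u ->
           (cost (DelEdge st u v) <= c * (dmax st).+1)%N),
        (forall (v : V) (wn : R), 0 <= wn -> wn <= wt st v ->
           (cost (DecWeight st v wn) <= c * ((dmax st) ^ 2).+1)%N) &
        (forall (v : V) (wn : R), wt st v <= wn ->
           (cost (IncWeight st v wn) <= c * (dmax st).+1)%N)].
Proof.
exists 10%N => R V st _; split.
- by move=> u v _ _; rewrite InsEdge_cost.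
- by move=> u v _; apply: leq_trans (DelEdge_cost st u v) _; lia.
- move=> v wn _ _; apply: leq_trans (DecWeight_cost st v wn) _; nia.
- by move=> v wn _; apply: leq_trans (IncWeight_cost st v wn) _; lia.
Qed.
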